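(* In the setup below, let $H\le\mathrm{SL}(P/Z)$, let $\varphi:H\to P$ be a map with $\varphi(hk)=\varphi(h)\,{}^h\varphi(k)$ for all $h,k\in H$, and let $S=\{\varphi(h)h : h\in H\}\le G$. Then $$N_P(S)=C_P(S)\le C_P(H)=N_P(H).$$
   Context: Setup: $p$ is an odd prime, $E$ is an extraspecial group of order $p^3$ and exponent $p$, $i\ge1$, and $P=E\circ C_{p^i}$ is the central product amalgamating $Z(E)$ with the subgroup of order $p$ of $C_{p^i}$; $Z:=Z(P)=C_{p^i}$. $\mathrm{SL}(P/Z)\cong\mathrm{SL}_2(\mathbb F_p)$ acts on $P$ by automorphisms fixing $Z$ pointwise and inducing the natural action on $P/Z\cong\mathbb F_p^2$ (with respect to a basis $\bar f_1,\bar f_2$, $f_1,f_2\in E$, the generators acting by $\begin{pmatrix}1&1\\0&1\end{pmatrix}: f_1\mapsto f_1, f_2\mapsto f_1f_2$ and $\begin{pmatrix}1&0\\1&1\end{pmatrix}: f_1\mapsto f_1f_2, f_2\mapsto f_2$). $G:=P\rtimes\mathrm{SL}(P/Z)$; ${}^gy=gyg^{-1}$. *)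

From mathcomp Require Import all_boot all_fingroup all_solvable.

(* [S] and [H] each meet every coset of [P] in [P ><| L] at most once, so an
   element of [P] normalising one of them can only fix each of its members.
   If [x] in [P] centralises [phi h * h], then [h^-1] acts on [x] like the
   inner automorphism by [phi h], hence trivially on [E / Z(E)] (and on [C]).
   The central involution [-1] of [SL_2(p)] inverts [E / Z(E)]; since [Z(E)]
   has odd order this forces [h] to fix [x] itself. *)

From mathcomp Require Import all_boot all_fingroup all_solvable.

Set Implicit Arguments.
Unset Strict Implicit.
Unset Printing Implicit Defensive.
Local Open Scope group_scope.

Lemma commute_conjg_fix (G : groupType) (x y : G) : commute x y -> x ^ y = x.
Proof. by move/commgP/conjg_fixP. Qed.

Lemma center_mulg_mem (gT : finGroupType) (E : {group gT}) e y :
  e \in E -> e * y \in 'Z(E) -> y \in E.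
Proof.
move=> Ee /(subsetP (center_sub E)) Eey.
by rewrite -(mulKg e y) groupM ?groupV.
Qed.

Section NormEqCent.

Variable gT : finGroupType.
Implicit Types (P L : {group gT}) (A H : {set gT}).

(* Conjugating [a] by [x] in [P] stays in the coset [P a]. *)
Lemma norm_eq_cent_coset_uniq P A :
    A \subset 'N(P) -> {in A &, forall a b, a * b^-1 \in P -> a = b} ->
  'N_P(A) = 'C_P(A).
Proof.
move=> nPA uniqA; apply/eqP; rewrite eqEsubset (setIS P (cent_sub A)) andbT.
apply/subsetP=> x /setIP[Px nAx]; rewrite inE Px; apply/centP=> a Aa.
have Aax : a ^ x \in A by rewrite memJ_norm.
have Pax : a ^ x * a^-1 \in P.
  have -> : a ^ x * a^-1 = x^-1 * x ^ a^-1 by rewrite !conjgE !gnorm.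
  by rewrite groupM ?groupV // memJ_norm ?groupV ?(subsetP nPA).
by apply/commute_sym/commgP/conjg_fixP; apply: uniqA.
Qed.

Lemma norm_eq_cent_graph P L H (phi : gT -> gT) :
    P :&: L = 1 -> L \subset 'N(P) -> H \subset L ->
    {in H, forall h, phi h \in P} ->
  'N_P([set phi h * h | h in H]) = 'C_P([set phi h * h | h in H]).
Proof.
move=> tiPL nPL sHL phiP; apply: norm_eq_cent_coset_uniq.
  apply/subsetP=> _ /imsetP[h Hh ->].
  have nPh : h \in 'N(P) by rewrite (subsetP nPL) ?(subsetP sHL).
  by rewrite groupM // (subsetP (normG P)) ?phiP.
move=> _ _ /imsetP[h Hh ->] /imsetP[k Hk ->] Pa_b.
suff -> : h = k by [].
have : h * k^-1 \in P :&: L.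
  rewrite inE [_ \in L]groupM ?groupV ?(subsetP sHL) // andbT.
  have -> : h * k^-1 = (phi h)^-1 * ((phi h * h) * (phi k * k)^-1) * phi k.
    by rewrite !gnorm.
  by rewrite groupM ?phiP // groupM // groupV phiP.
by rewrite tiPL => /set1gP/eqP; rewrite -eq_mulgV1 => /eqP.
Qed.

End NormEqCent.

Lemma odd_order_expg2_eq1 (gT : finGroupType) (G : {group gT}) x :
  odd #|G| -> x \in G -> x ^+ 2 = 1 -> x = 1.
Proof.
move=> oddG Gx x2; apply/eqP; rewrite -order_eq1.
have odd_x : odd #[x] := dvdn_odd (order_dvdG Gx) oddG.
have /dvdn_leq le_x2 : #[x] %| 2 by rewrite order_dvdn x2.
by move: le_x2 odd_x (order_gt0 x); case: #[x] => [|[|[|]]].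
Qed.

Section CentralInversion.

Variables (gT : finGroupType) (E L : {group gT}) (t : gT).
Hypotheses (oddE : odd #|E|) (cZL : L \subset 'C('Z(E))) (Zt : t \in 'Z(L)).
Hypothesis inv_t : {in E, forall e, e * e ^ t \in 'Z(E)}.

Let conj_center g z : g \in L -> z \in 'Z(E) -> z ^ g = z.
Proof.
move=> Lg Zz; apply/conjg_fixP/commgP/commute_sym.
exact: (centP (subsetP cZL g Lg)).
Qed.

Let center_commute z e : z \in 'Z(E) -> e \in E -> commute z e.
Proof. by case/setIP=> _ /centP; apply. Qed.

Let Lt : t \in L. Proof. by case/setIP: Zt. Qed.

(* Every coset [e Z(E)] contains an element inverted by [t]: correct [e] by a
   square root of [(e e^t)^-1], which exists in the odd-order group [Z(E)]. *)
Lemma center_coset_inverted e :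
  e \in E -> exists2 c, c \in 'Z(E) & (e * c) ^ t = (e * c)^-1.
Proof.
move=> Ee; have Zz := inv_t Ee; set z := e * e ^ t in Zz.
exists (z ^+ #|E|./2); first exact: groupX.
set c := z ^+ _; have Zc : c \in 'Z(E) by apply: groupX.
apply: (mulgI (e * c)); rewrite mulgV conjMg (conj_center Lt Zc).
have Eet : e ^ t \in E := center_mulg_mem Ee Zz.
rewrite mulgA -(mulgA e c) (center_commute Zc Eet) mulgA -/z.
rewrite -mulgA -expgD addnn -expgS (odd_halfK oddE) prednK ?cardG_gt0 //.
by rewrite expg_cardG // (subsetP (center_sub E)).
Qed.

(* [t] inverts [s := e c] and commutes with [g], so it also inverts
   [s ^ g = s z]; as [z] is central this forces [z ^+ 2 = 1]. *)
Lemma conj_fix_mod_center :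
  {in L & E, forall g e, e^-1 * e ^ g \in 'Z(E) -> e ^ g = e}.
Proof.
move=> g e Lg Ee; have : e ^ g = e * (e^-1 * e ^ g) by rewrite mulKVg.
move: (e^-1 * e ^ g) => z eg Zz; have EZ := subsetP (center_sub E).
have [c Zc inv_s] := center_coset_inverted Ee.
have Es : e * c \in E by rewrite groupM // EZ.
have sg : (e * c) ^ g = e * c * z.
  rewrite conjMg eg (conj_center Lg Zc) -!mulgA.
  by rewrite (center_commute Zz (EZ c Zc)).
move: (e * c) Es inv_s sg => s Es inv_s sg.
have inv_sg : (s ^ g) ^ t = (s ^ g)^-1.
  case/setIP: Zt => _ /centP cLt.
  by rewrite -conjgM -(cLt g Lg) conjgM inv_s conjVg.
have zV : z = z^-1.
  move: inv_sg; rewrite sg conjMg inv_s (conj_center Lt Zz) invMg.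
  by rewrite (center_commute (groupVr Zz) (groupVr Es)) => /mulgI.
have z1 : z = 1.
  by apply: (odd_order_expg2_eq1 oddE (EZ z Zz)); rewrite expg2 {1}zV mulVg.
by rewrite eg z1 mulg1.
Qed.

End CentralInversion.

Section CentralProduct.

Variables (gT : finGroupType) (E C P L : {group gT}).
Hypotheses (defP : E \* C = P) (cCC : abelian C) (cCL : L \subset 'C(C)).
Hypothesis sEE'_Z : [~: E, E] \subset 'Z(E).
Hypothesis fix_mod_center :
  {in L & E, forall g e, e^-1 * e ^ g \in 'Z(E) -> e ^ g = e}.

(* Writing [x = e c] and [y = e' c'] with [c, c'] central in [P] and fixed by
   [L], the hypothesis becomes [e ^ g = e ^ e'], so [g] moves [e] by the
   commutator [[e, e']]. *)
Lemma conj_fix_of_inner x y g :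
  x \in P -> y \in P -> g \in L -> x ^ y = x ^ g -> x ^ g = x.
Proof.
case/cprodP: defP => _ defEC cEC; rewrite -defEC.
case/mulsgP=> e c Ee Cc ->; case/mulsgP=> e' c' Ee' Cc' -> Lg.
have cEc := subsetP cEC c Cc; have cEc' := subsetP cEC c' Cc'.
have fix_c := commute_conjg_fix (commute_sym (centP (subsetP cCL g Lg) c Cc)).
have fix_c' : c ^ (e' * c') = c.
  apply/commute_conjg_fix/commuteM; first exact: (centP cEc).
  exact: (centP (subsetP cCC c Cc)).
have fix_ee' : (e ^ e') ^ c' = e ^ e'.
  exact/commute_conjg_fix/commute_sym/(centP cEc')/groupJ.
rewrite !conjMg fix_c fix_c' conjgM fix_ee' => /mulIg ee'.
by rewrite fix_mod_center // -ee' -commgEl (subsetP sEE'_Z) // mem_commg.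
Qed.

Lemma cent_graph_sub_cent (H : {set gT}) (phi : gT -> gT) :
    H \subset L -> {in H, forall h, phi h \in P} ->
  'C_P([set phi h * h | h in H]) \subset 'C_P(H).
Proof.
move=> sHL phiP; apply/subsetP=> x /setIP[Px cSx]; rewrite inE Px.
apply/centP=> h Hh; have Lh' : h^-1 \in L by rewrite groupV (subsetP sHL).
have : x ^ phi h = x ^ h^-1.
  have /commute_conjg_fix : commute x (phi h * h).
    by apply: (centP cSx); exact: imset_f.
  by rewrite conjgM => fix_x; rewrite -{2}fix_x conjgK.
move/(conj_fix_of_inner Px (phiP h Hh) Lh') => fix_x.
by rewrite -[h]invgK; apply/commuteV/commgP/conjg_fixP.
Qed.

End CentralProduct.

Lemma conj_inv_mod_center_gen (gT : finGroupType) (E : {group gT}) A t :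
    E = <<A>> -> [~: E, E] \subset 'Z(E) ->
    {in A, forall a, a * a ^ t \in 'Z(E)} ->
  {in E, forall e, e * e ^ t \in 'Z(E)}.
Proof.
move=> defE sEE'_Z invA; pose Q := [set e in E | e * e ^ t \in 'Z(E)].
have gQ : group_set Q.
  apply/group_setP; split=> [|a b].
    by rewrite inE group1 conj1g mulg1 group1.
  case/setIdP=> Ea Za /setIdP[Eb Zb]; rewrite inE groupM //=.
  have -> : a * b * (a * b) ^ t = a * a ^ t * [~ a ^ t, b^-1] * (b * b ^ t).
    by rewrite conjMg commgEl !conjgE !gnorm.
  have Eat := center_mulg_mem Ea Za.
  by rewrite groupM // groupM // (subsetP sEE'_Z) // mem_commg ?groupV.
have sEQ : E \subset Group gQ.
  rewrite defE gen_subG; apply/subsetP=> a Aa.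
  by rewrite inE invA // defE mem_gen.
by move=> e /(subsetP sEQ); rewrite inE => /andP[].
Qed.

Lemma conj_inj_gen (gT : finGroupType) (E C P L : {group gT}) A :
    E \* C = P -> 'C_L(P) = 1 -> L \subset 'C(C) -> E = <<A>> ->
  {in L &, forall g1 g2, {in A, forall a, a ^ g1 = a ^ g2} -> g1 = g2}.
Proof.
case/cprodP=> _ defEC _ tiLP cCL defE g1 g2 Lg1 Lg2 eqA.
have cAg : g1 * g2^-1 \in 'C(A).
  apply/centP=> a Aa; apply/commute_sym/commgP/conjg_fixP.
  by rewrite conjgM eqA // conjgK.
have : g1 * g2^-1 \in 'C_L(P).
  rewrite inE groupM ?groupV // -defEC centM inE defE cent_gen cAg.
  by rewrite (subsetP cCL) ?groupM ?groupV.
by rewrite tiLP => /set1gP/eqP; rewrite -eq_mulgV1 => /eqP.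
Qed.

Section SL2Generators.

Variables (gT : finGroupType) (E C P L : {group gT}) (f1 f2 u l : gT).
Hypotheses (defP : E \* C = P) (tiLP : 'C_L(P) = 1) (cCL : L \subset 'C(C)).
Hypotheses (defE : E = <<[set f1; f2]>>) (defL : L = <<[set u; l]>>).
Hypothesis sEE'_Z : [~: E, E] \subset 'Z(E).
Hypotheses (u_f1 : f1 ^ u^-1 = f1) (u_f2 : f2 ^ u^-1 = f1 * f2).
Hypotheses (l_f1 : f1 ^ l^-1 = f1 * f2) (l_f2 : f2 ^ l^-1 = f2).

Let w := u^-1 * l * u^-1.
Let t := w ^+ 2.

Let l_f2' : f2 ^ l = f2. Proof. by rewrite -{1}l_f2 conjgKV. Qed.

Let l_f1' : f1 ^ l = f1 * f2^-1.
Proof.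
have := congr1 (conjg^~ l) l_f1; rewrite /= conjgKV conjMg l_f2' => def_f1.
by rewrite {2}def_f1 mulgK.
Qed.

Let w_f1 : f1 ^ w = f1 * f2^-1 * f1^-1.
Proof. by rewrite !conjgM u_f1 l_f1' !conjMg conjVg u_f1 u_f2 invMg mulgA. Qed.

Let w_f2 : f2 ^ w = f1.
Proof. by rewrite !conjgM u_f2 (conjMg f1) l_f1' l_f2' mulgKV u_f1. Qed.

Let t_f1 : f1 ^ t = f1 * f2^-1 * f1^-1 * f2 * f1^-1.
Proof. by rewrite /t expg2 conjgM w_f1 !conjMg !conjVg w_f1 w_f2 !gnorm. Qed.

Let t_f2 : f2 ^ t = f1 * f2^-1 * f1^-1.
Proof. by rewrite /t expg2 conjgM w_f2 w_f1. Qed.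

Let Lu : u \in L. Proof. by rewrite defL mem_gen ?set21. Qed.
Let Ll : l \in L. Proof. by rewrite defL mem_gen ?set22. Qed.
Let Lt : t \in L. Proof. by rewrite groupX // !groupM ?groupV. Qed.

Let t_commute_uV : commute t u^-1.
Proof.
apply: (conj_inj_gen defP tiLP cCL defE); rewrite ?groupM ?groupV //.
move=> _ /set2P[]->; rewrite (conjgM _ t) (conjgM _ u^-1).
  by rewrite t_f1 u_f1 !conjMg !conjVg u_f1 u_f2 t_f1 !gnorm.
by rewrite t_f2 u_f2 !conjMg !conjVg u_f1 u_f2 t_f1 t_f2 !gnorm.
Qed.

(* [w] is the Weyl element [[0, 1], [-1, 0]] of [SL_2(p)], so [t = w ^+ 2]
   acts as [-1] on [E / Z(E)] and is central in [L]. *)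
Lemma central_inversion_mod_center :
  exists2 t, t \in 'Z(L) & {in E, forall e, e * e ^ t \in 'Z(E)}.
Proof.
exists t.
  have tu : commute t u by rewrite -[u]invgK; apply: commuteV.
  have tw : commute t w := commute_sym (commuteX 2 (commute_refl w)).
  rewrite inE Lt defL cent_gen; apply/centP=> _ /set2P[]-> //.
  have -> : l = u * w * u by rewrite /w !mulgA mulgV mul1g mulgKV.
  by apply: commuteM => //; apply: commuteM.
have Ef1 : f1 \in E by rewrite defE mem_gen ?set21.
have Ef2 : f2 \in E by rewrite defE mem_gen ?set22.
apply: (conj_inv_mod_center_gen defE sEE'_Z) => _ /set2P[]->.
  have -> : f1 * f1 ^ t = [~ f1^-1, f2] ^ f1^-1.
    by rewrite t_f1 commgEl !conjgE !gnorm.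
  have nZE := normal_norm (center_normal E).
  rewrite memJ_norm; last by rewrite (subsetP nZE) ?groupV.
  by rewrite (subsetP sEE'_Z) // mem_commg ?groupV.
have -> : f2 * f2 ^ t = [~ f2^-1, f1^-1] by rewrite t_f2 commgEl !conjgE !gnorm.
by rewrite (subsetP sEE'_Z) // mem_commg ?groupV.
Qed.

End SL2Generators.

Theorem mainTheorem14 (gT : finGroupType) (p i : nat)
    (E C P L G H : {group gT}) (f1 f2 u l : gT) (phi : gT -> gT) :
  prime p -> odd p -> (0 < i)%N ->
  extraspecial E -> #|E| = (p ^ 3)%N -> exponent E = p ->
  cyclic C -> #|C| = (p ^ i)%N -> E \* C = P -> E :&: C = 'Z(E) ->
  f1 \in E -> f2 \in E -> E = <<[set f1; f2]>> ->
  P ><| L = G -> 'C_L(P) = 1 -> L \subset 'C(C) ->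
  u \in L -> l \in L -> L = <<[set u; l]>> ->
  f1 ^ u^-1 = f1 -> f2 ^ u^-1 = f1 * f2 ->
  f1 ^ l^-1 = f1 * f2 -> f2 ^ l^-1 = f2 ->
  H \subset L ->
  {in H, forall h, phi h \in P} ->
  {in H &, forall h k, phi (h * k) = phi h * (phi k ^ h^-1)} ->
  let S := [set phi h * h | h in H] in
  'N_P(S) = 'C_P(S) /\ 'C_P(S) \subset 'C_P(H) /\ 'C_P(H) = 'N_P(H).
Proof.
move=> _ odd_p _ esE oE _ cycC _ defP tiEC _ _ defE defG tiLP cCL _ _ defL
  u_f1 u_f2 l_f1 l_f2 sHL phiP _ S.
have [_ _ nPL tiPL] := sdprodP defG.
have sEE'_Z : [~: E, E] \subset 'Z(E).
  by case: esE => [[_ derE] _]; rewrite -derg1 derE.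
have oddE : odd #|E| by rewrite oE oddX odd_p orbT.
have cZL : L \subset 'C('Z(E)).
  by rewrite (subset_trans cCL) // centS // -tiEC subsetIr.
have [t Zt inv_t] := central_inversion_mod_center defP tiLP cCL defE defL
  sEE'_Z u_f1 u_f2 l_f1 l_f2.
have fixZ := conj_fix_mod_center oddE cZL Zt inv_t.
split; first exact: norm_eq_cent_graph tiPL nPL sHL phiP.
split; first exact: (cent_graph_sub_cent defP (cyclic_abelian cycC) cCL sEE'_Z
  fixZ sHL phiP).
have := norm_eq_cent_graph (phi := fun=> 1) tiPL nPL sHL (fun _ _ => group1 P).
by rewrite (eq_imset _ mul1g) imset_id => ->.
Qed.
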